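(* For $i=1,\dots,K$ let $f_i:\mathbb{R}^{n_i}\to\mathbb{R}$ be convex with convex feasible set $\mathcal{X}_i$ and optimal value $f_i^*=\min_{x\in\mathcal{X}_i}f_i(x)$, and let $\mathcal{A}_i$ be a $g_i(k)$-bounded algorithm for $\min_{x\in\mathcal{X}_i}f_i(x)$. Run the F-LCB algorithm with these base algorithms (deterministic oracles). Then for every $\tau\in\{1,\dots,T\}$, $$R_O(\tau)\le\sum_{t=1}^{\tau}g_{i_t}(k_{i_t,t})=\sum_{i=1}^K\sum_{k=1}^{k_{i,\tau}}g_i(k),$$ where $k_{i,t}$ is the number of calls (updates) of the $i$-th function by time $t$.
   Context: An algorithm $x_{k+1}=\mathcal{A}(x_0,\mathcal{O}(x_0),\dots,x_k,\mathcal{O}(x_k))$ for $\min_{x\in\mathcal{X}}f(x)$ is $g(k)$-bounded if $f(x_k)-f(x^* )\le g(k)$ for every $k\in\mathbb{N}$, where $x^*$ is a minimizer. F-LCB algorithm: start from initial points $x_0^{i}$; run one step of each $\mathcal{A}_i$ to get $x_1^i$, set $k_i=1$ and $LCB_i=f_i(x_{1}^{i})-g_i(1)$. For $t=1,\dots,T$: choose $i_t=\arg\min_{1\le i\le K}LCB_i$; run one more step of $\mathcal{A}_{i_t}$ to obtain $x^{i_t}_{k_{i_t}+1}$; set $LCB_{i_t}=f_{i_t}(x^{i_t}_{k_{i_t}+1})-g_{i_t}(k_{i_t}+1)$ (other indices unchanged); increase $k_{i_t}$ by one. Denote by $x^{i,k}$ the $k$-th iterate of arm $i$. The loss at round $t$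 is $f_{i_t}(x^{i_t,k_{i_t,t}})$, the value of the chosen arm at the iterate used for its current LCB, and the regret is $R_O(\tau)=\sum_{t=1}^{\tau}\big[f_{i_t}(x^{i_t,k_{i_t,t}})-f^*\big]$ with $f^*=\min_i f_i^*$. *)

From HB Require Import structures.
From mathcomp Require Import all_boot all_order all_algebra.
From mathcomp Require Import reals.
Set Implicit Arguments. Unset Strict Implicit. Unset Printing Implicit Defensive.
Import Order.TTheory GRing.Theory Num.Theory.
Local Open Scope ring_scope.

Definition convex_fun (R : realType) (n : nat) (f : 'rV[R]_n -> R) : Prop :=
  forall (x y : 'rV[R]_n) (t : R), 0 <= t <= 1 ->
    f (t *: x + (1 - t) *: y) <= t * f x + (1 - t) * f y.

Definition convex_set (R : realType) (n : nat) (X : 'rV[R]_n -> Prop) : Prop :=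
  forall (x y : 'rV[R]_n) (t : R), X x -> X y -> 0 <= t <= 1 ->
    X (t *: x + (1 - t) *: y).

(* History of a deterministic first-order-type method
   x_{k+1} = A(x_0, O(x_0), ..., x_k, O(x_k)):
   hist k = [:: (x_0, O x_0); ...; (x_k, O x_k)]. *)
Fixpoint alg_hist (P O : Type) (A : seq (P * O) -> P) (orc : P -> O) (x0 : P)
  (k : nat) : seq (P * O) :=
  match k with
  | 0 => [:: (x0, orc x0)]
  | k'.+1 => let h := alg_hist A orc x0 k' in
             let y := A h in rcons h (y, orc y)
  end.

Definition alg_iter (P O : Type) (A : seq (P * O) -> P) (orc : P -> O) (x0 : P)
  (k : nat) : P :=
  (last (x0, orc x0) (alg_hist A orc x0 k)).1.

Definition g_bounded (R : realType) (P O : Type) (f : P -> R) (xstar : P)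
  (A : seq (P * O) -> P) (orc : P -> O) (x0 : P) (g : nat -> R) : Prop :=
  forall k : nat, f (alg_iter A orc x0 k) - f xstar <= g k.

Definition ncalls (K : nat) (sel : nat -> 'I_K) (i : 'I_K) (t : nat) : nat :=
  \sum_(1 <= s < t.+1) (sel s == i).

From HB Require Import structures.
From mathcomp Require Import all_boot all_order all_algebra.
From mathcomp Require Import reals lra.
Set Implicit Arguments. Unset Strict Implicit. Unset Printing Implicit Defensive.
Import Order.TTheory GRing.Theory Num.Theory.
Local Open Scope ring_scope.

(* At round t the chosen arm has the smallest lower confidence bound, and the
   lower confidence bound of an arm attaining f^* never exceeds f^* because its
   base algorithm is g-bounded; hence the loss of round t exceeds f^* by at most
   the bonus g_{i_t}(k) of the chosen arm.  Summing, and grouping the rounds by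
   the arm they select (the round in which arm i is selected for the k-th time
   contributes g_i(k)), gives both claims. *)

Lemma lcb_le_opt (R : realType) (P O : Type) (f : P -> R) (xstar : P)
    (A : seq (P * O) -> P) (orc : P -> O) (x0 : P) (g : nat -> R) :
  g_bounded f xstar A orc x0 g -> forall k, f (alg_iter A orc x0 k) - g k <= f xstar.
Proof. by move=> hg k; have := hg k; lra. Qed.

Section Ncalls.

Variables (K : nat) (sel : nat -> 'I_K).

Lemma ncallsS (i : 'I_K) (t : nat) :
  ncalls sel i t.+1 = (ncalls sel i t + (sel t.+1 == i))%N.
Proof. by rewrite /ncalls big_nat_recr. Qed.

Lemma ncalls_sel (t : nat) : (0 < t)%N ->
  ncalls sel (sel t) t = (1 + ncalls sel (sel t) t.-1)%N.
Proof. by case: t => // t _; rewrite ncallsS eqxx addn1. Qed.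

Lemma sum_rounds_by_arm (V : nmodType) (g : 'I_K -> nat -> V) (tau : nat) :
  \sum_(1 <= t < tau.+1) g (sel t) (ncalls sel (sel t) t)
  = \sum_(i < K) \sum_(1 <= k < (ncalls sel i tau).+1) g i k.
Proof.
elim: tau => [|tau IH].
  by rewrite big_geq // big1 // => i _; rewrite /ncalls !big_geq.
have arm_step i : \sum_(1 <= k < (ncalls sel i tau.+1).+1) g i k =
    \sum_(1 <= k < (ncalls sel i tau).+1) g i k
    + (if sel tau.+1 == i then g i (ncalls sel i tau.+1) else 0).
  rewrite ncallsS; case: eqP => _; last by rewrite addn0 addr0.
  by rewrite addn1 big_nat_recr.
rewrite big_nat_recr //= IH (eq_bigr _ (fun i _ => arm_step i)) big_split /=.
congr (_ + _).
by rewrite -big_mkcond (big_pred1 (sel tau.+1)) // => i; rewrite eq_sym.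
Qed.

End Ncalls.

Theorem lemma1 (R : realType) (K : nat) (n : 'I_K -> nat)
  (f : forall i : 'I_K, 'rV[R]_(n i) -> R)
  (X : forall i : 'I_K, 'rV[R]_(n i) -> Prop)
  (xstar : forall i : 'I_K, 'rV[R]_(n i))
  (OT : 'I_K -> Type)
  (O : forall i : 'I_K, 'rV[R]_(n i) -> OT i)
  (A : forall i : 'I_K, seq ('rV[R]_(n i) * OT i) -> 'rV[R]_(n i))
  (x0 : forall i : 'I_K, 'rV[R]_(n i))
  (g : 'I_K -> nat -> R)
  (fstar : R) (T : nat) (sel : nat -> 'I_K) :
  (forall i, convex_fun (f i)) ->
  (forall i, convex_set (X i)) ->
  (forall i, X i (xstar i)) ->
  (forall i (x : 'rV[R]_(n i)), X i x -> f i (xstar i) <= f i x) ->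
  (forall i, g_bounded (f i) (xstar i) (A i) (O i) (x0 i) (g i)) ->
  (* f^* = min_i f_i^* *)
  (exists i, fstar = f i (xstar i)) ->
  (forall i, fstar <= f i (xstar i)) ->
  (* i_t = argmin_i LCB_i at round t *)
  (forall t, (1 <= t <= T)%N -> forall j : 'I_K,
     let k_t := (1 + ncalls sel (sel t) t.-1)%N in
     let k_j := (1 + ncalls sel j t.-1)%N in
     f (sel t) (alg_iter (A (sel t)) (O (sel t)) (x0 (sel t)) k_t) - g (sel t) k_t
       <= f j (alg_iter (A j) (O j) (x0 j) k_j) - g j k_j) ->
  forall tau : nat, (1 <= tau <= T)%N ->
    \sum_(1 <= t < tau.+1)
       (f (sel t) (alg_iter (A (sel t)) (O (sel t)) (x0 (sel t))
                     (1 + ncalls sel (sel t) t.-1)%N) - fstar)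
      <= \sum_(1 <= t < tau.+1) g (sel t) (ncalls sel (sel t) t)
    /\ \sum_(1 <= t < tau.+1) g (sel t) (ncalls sel (sel t) t)
       = \sum_(i < K) \sum_(1 <= k < (ncalls sel i tau).+1) g i k.
Proof.
move=> _ _ _ _ hg [jstar ->] _ hsel tau /andP [_ tau_le_T].
split; last exact: sum_rounds_by_arm.
apply: ler_sum_nat => t /andP [t_gt0 t_le_tau].
have t_round : (1 <= t <= T)%N by rewrite t_gt0 (leq_trans _ tau_le_T).
have := hsel t t_round jstar; rewrite /= ncalls_sel //.
have := lcb_le_opt (hg jstar) (1 + ncalls sel jstar t.-1).
lra.
Qed.
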